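(* Let $g:(0,\infty)\to(0,\infty)$ decrease monotonically to zero. Let $b,m,\kappa\in\mathbb N$ with $m<|\mathfrak E(B_b)|$. If $u\mapsto u^d\,\mathbb P[w\le g(u)]^m$ is bounded from above, then for every $\epsilon\in[0,\kappa(m+\kappa)^{-1})$ $$\mathbb P\Big[\liminf_{n\to\infty}\bigcap_{\mathfrak A\subseteq\mathfrak E(B_b),\,|\mathfrak A|\ge m+\kappa}\ \bigcap_{z\in B_{n+b}}J_{g(n^{1-\epsilon})}(\mathfrak A\circ\tau_z)\Big]=1.$$
   Context: Let $d\ge2$, $\mathfrak E_d$ the nearest-neighbour edges of $\mathbb Z^d$. Conductances $(w_e)_{e\in\mathfrak E_d}$ are i.i.d. $(0,\infty)$-valued with law $\mathbb P$; $w$ a generic copy. $B_n=[-n,n]^d\cap\mathbb Z^d$. For $\alpha>0$ and $\mathfrak A\subseteq\mathfrak E_d$, $J_\alpha(\mathfrak A)=\{\exists e\in\mathfrak A: w_e>\alpha\}$. For $A\subset\mathbb Z^d$, $\mathfrak E(A)=\{\{x,x+\boldsymbol e_j\}: x\in A,\ j\in\{1,\dots,d\}\}$. For $z\in\mathbb Z^d$, $\mathfrak A\circ\tau_z=\{\{x+z,y+z\}:\{x,y\}\in\mathfrak A\}$. $\liminf_n E_n=\bigcup_n\bigcap_{k\ge n}E_k$. *)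

From HB Require Import structures.
From mathcomp Require Import all_boot all_order all_algebra.
From mathcomp Require Import all_classical all_reals all_analysis.
From mathcomp Require Import finmap.
Unset Printing Implicit Defensive.
Import Order.TTheory GRing.Theory Num.Theory.
Local Open Scope classical_set_scope.
Local Open Scope ring_scope.

(* Points of Z^d and nearest-neighbour edges.  The edge {x, x + e_j}
   (j : 'I_d) is represented by the pair (x, j); this is a bijection
   with the nearest-neighbour edges of Z^d. *)
Definition point (d : nat) := (d.-tuple int)%type.
Definition edge (d : nat) := (point d * 'I_d)%type.

Definition vadd (d : nat) (x z : point d) : point d :=
  [tuple tnth x i + tnth z i | i < d].

Definition box (d n : nat) : set (point d) :=
  [set x | forall i : 'I_d, `|tnth x i| <= n%:Z].

Definition edges_of (d : nat) (A : set (point d)) : set (edge d) :=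
  [set e | A e.1].

Definition etranslate (d : nat) (A : set (edge d)) (z : point d) : set (edge d) :=
  (fun e : edge d => (vadd d e.1 z, e.2)) @` A.

Definition ecard (d : nat) (A : set (edge d)) : nat := (#|` fset_set A|)%fset.

Definition J_event (R : realType) (d : nat) (T : Type)
  (w : edge d -> T -> R) (alpha : R) (A : set (edge d)) : set T :=
  [set t | exists2 e, A e & alpha < w e t].

Definition liminf_set (T : Type) (E : nat -> set T) : set T :=
  [set t | exists N, forall n, (N <= n)%N -> E n t].

(* (w_e) are i.i.d. random variables on (T, P) with common law mu:
   each is measurable, has law mu, and they are mutually independent
   (product rule for every finite family of distinct edges). *)
Definition iid_with_law (R : realType) (dm : measure_display)
  (T : measurableType dm) (P : probability T R) (d : nat)
  (w : edge d -> T -> R) (mu : probability R R) : Prop :=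
  [/\ (forall e, measurable_fun setT (w e)),
      (forall e (B : set R), measurable B -> P (w e @^-1` B) = mu B) &
      (forall (s : seq (edge d)) (B : edge d -> set R), uniq s ->
         (forall e, measurable (B e)) ->
         P (\big[setI/setT]_(e <- s) (w e @^-1` B e)) =
         (\prod_(e <- s) P (w e @^-1` B e))%E)].

From Pilot Require Import Defs.
From HB Require Import structures.
From mathcomp Require Import all_boot all_order all_algebra.
From mathcomp Require Import all_classical all_reals all_analysis.
From mathcomp Require Import finmap.
From mathcomp Require Import zify ring lra.
Import Order.TTheory GRing.Theory Num.Theory.
Local Open Scope classical_set_scope.
Local Open Scope ring_scope.

(* Failure at time n means that some translate z + A, z in B_(n+b), of an edge
   set A of E(B_b) with |A| >= m + kappa carries only weights <= g(n^(1-eps)).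
   For n in the dyadic block [2^k, 2^(k+1)), independence and a union bound
   give probability at most c (2^k)^d p^(m+kappa), p = P[w <= g(2^(k(1-eps)))].
   The growth hypothesis at u = 2^(k(1-eps)) gives p^m <= C u^(-d), so this is
   O(2^(k d (1 - (1-eps)(m+kappa)/m))): a summable geometric sequence exactly
   when eps < kappa/(m+kappa).  Borel-Cantelli over the blocks concludes. *)

Section lattice.
Context {d : nat}.

Definition eshift (z : Defs.point d) (e : edge d) : edge d := (vadd d e.1 z, e.2).

Lemma vaddIr z : injective (vadd d ^~ z).
Proof.
move=> x y /(congr1 (fun t => tnth t)) xy; apply: eq_from_tnth => i.
by have := congr1 (fun f => f i) xy; rewrite /= /vadd !tnth_mktuple => /addIr.
Qed.

Lemma eshift_inj z : injective (eshift z).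
Proof.
move=> [x j] [y k] e.
by rewrite (vaddIr _ x y (congr1 fst e)) (congr1 snd e : j = k).
Qed.

(* Shifting coordinates by N puts B_N in bijection with 'I_(2N+1)^d. *)
Definition box_point (N : nat) (f : {ffun 'I_d -> 'I_(2 * N).+1}) : Defs.point d :=
  [tuple (f i : nat)%:Z - N%:Z | i < d].

Lemma box_point_in N f : box d N (box_point N f).
Proof. by move=> i; rewrite tnth_mktuple; have := ltn_ord (f i); rewrite ltnS; lia. Qed.

Lemma box_pointP N z : box d N z -> exists f, box_point N f = z.
Proof.
move=> zN; exists [ffun i => inord (absz (tnth z i + N%:Z))].
apply: eq_from_tnth => i; rewrite tnth_mktuple ffunE.
have ziN : `|tnth z i| <= N%:Z := zN i.
by rewrite inordK; [lia | rewrite ltnS; lia].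
Qed.

Lemma box_le N N' : (N <= N')%N -> box d N `<=` box d N'.
Proof. by move=> NN' z zN i; apply: le_trans (zN i) _; rewrite lez_nat. Qed.

Lemma finite_edges_box N : finite_set (edges_of d (box d N)).
Proof.
have -> : edges_of d (box d N) =
    (fun fj : {ffun 'I_d -> 'I_(2 * N).+1} * 'I_d => (box_point N fj.1, fj.2)) @` setT.
  apply/seteqP; split => [[x j] /= /box_pointP [f fx]|_ [[f j] _ <-]].
    by exists (f, j); rewrite //= fx.
  exact: box_point_in.
exact/finite_image/finite_finset.
Qed.

End lattice.

Definition big_subsets (d b M : nat) : seq {fset edge d} :=
  [seq B <- fpowerset (fset_set (edges_of d (box d b))) | (M <= #|` B|)%N].

Section bad_event.
Context {R : realType} {d : nat} {T : Type} (w : edge d -> T -> R) (b M : nat).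

(* The complement of the event of the theorem at scale N and level G (see
   bigcap_J_eventE), written as a finite union to allow a union bound. *)
Definition bad_event (N : nat) (G : R) : set T :=
  \big[setU/set0]_(B <- big_subsets d b M)
    \big[setU/set0]_(f : {ffun 'I_d -> 'I_(2 * N).+1})
      \big[setI/setT]_(e <- B) (w (eshift (box_point N f) e) @^-1` `]-oo, G]).

Lemma bad_eventP N G t : bad_event N G t <->
  exists2 B, B \in big_subsets d b M & exists2 z, box d N z &
    forall e, e \in B -> w (eshift z e) t <= G.
Proof.
rewrite /bad_event -bigcup_seq; split.
- move=> [B BF]; rewrite -bigcup_seq => -[f _]; rewrite -bigcap_seq => Bf.
  exists B => //; exists (box_point N f); first exact: box_point_in.
  by move=> e /Bf; rewrite /= in_itv.
- move=> [B BF [z /box_pointP [f <-] Bz]]; exists B => //.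
  rewrite -bigcup_seq; exists f; first exact: mem_index_enum.
  by rewrite -bigcap_seq => e /Bz; rewrite /= in_itv.
Qed.

Lemma bad_event_le N N' G G' : (N <= N')%N -> G <= G' ->
  bad_event N G `<=` bad_event N' G'.
Proof.
move=> NN' GG' t /bad_eventP [B BF [z zN Bz]]; apply/bad_eventP.
exists B => //; exists z; first exact: box_le zN.
by move=> e /Bz /le_trans; apply.
Qed.

Lemma bigcap_J_eventE N G :
  \bigcap_(A in [set A : set (edge d) |
                   A `<=` edges_of d (box d b) /\ (M <= ecard d A)%N])
     \bigcap_(z in box d N) J_event R d T w G (etranslate d A z)
  = ~` bad_event N G.
Proof.
have finb := @finite_edges_box d b.
apply/seteqP; split => t.
- move=> Jt /bad_eventP [B]; rewrite mem_filter fpowersetE => /andP[MB Bb].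
  move=> [z zN Bz].
  have [|_ [e eB <-]] := Jt [set` B] _ z zN; last by rewrite ltNge Bz.
  split; last by rewrite /ecard set_fsetK.
  by move=> e /= /(fsubsetP Bb); rewrite in_fset_set // => /set_mem.
- move=> nbad A [Ab MA] z zN; have finA := sub_finite_set Ab finb.
  apply: contrapT => nJ; apply: nbad; apply/bad_eventP; exists (fset_set A).
    by rewrite mem_filter MA fpowersetE -fset_set_sub.
  exists z => // e; rewrite in_fset_set // => /set_mem Ae.
  by rewrite leNgt; apply/negP => Ge; apply: nJ; exists (eshift z e) => //; exists e.
Qed.

End bad_event.

Lemma le_measure_bigsetU_seq {dm} {T : measurableType dm} {R : realType}
    (mu : {measure set T -> \bar R}) (I : Type) (s : seq I) (F : I -> set T) :
  (forall i, measurable (F i)) ->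
  (mu (\big[setU/set0]_(i <- s) F i) <= \sum_(i <- s) mu (F i))%E.
Proof.
move=> mF; elim: s => [|i s IHs]; first by rewrite !big_nil measure0.
rewrite !big_cons; apply: le_trans (measureU2 _ (mF i) _) (leeD2l _ IHs).
exact: bigsetU_measurable.
Qed.

Section bad_event_probability.
Context {R : realType} {d : nat} {dm : measure_display} {T : measurableType dm}
  {P : probability T R} {w : edge d -> T -> R} {mu : probability R R} {b M : nat}.

Lemma bad_event_measurable N G : (forall e, measurable_fun setT (w e)) ->
  measurable (bad_event w b M N G).
Proof.
move=> mw; apply: bigsetU_measurable => B _; apply: bigsetU_measurable => f _.
apply: bigsetI_measurable => e _; rewrite -[X in measurable X]setTI.
exact: mw measurableT _ (measurable_itv _).
Qed.

Lemma bad_event_bound N G : iid_with_law R dm T P d w mu ->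
  (P (bad_event w b M N G) <=
   ((size (big_subsets d b M) * (2 * N + 1) ^ d)%N%:R
      * fine (mu `]-oo, G]%classic) ^+ M)%:E)%E.
Proof.
move=> [mw law indep]; set p := fine (mu `]-oo, G]%classic).
have mG : measurable (`]-oo, G]%classic : set R) by exact: measurable_itv.
have muG : mu `]-oo, G]%classic = p%:E by rewrite fineK ?fin_num_measure.
have p01 : 0 <= p <= 1.
  rewrite -!lee_fin -muG measure_ge0 -(probability_setT mu).
  exact: le_measure (mem_set mG) (mem_set measurableT) (subsetT _).
have mpre e : measurable (w e @^-1` `]-oo, G]%classic).
  by rewrite -[X in measurable X]setTI; exact: mw measurableT _ mG.
have translate_bound B f : B \in big_subsets d b M ->
    (P (\big[setI/setT]_(e <- B) w (eshift (box_point N f) e) @^-1` `]-oo, G]%classic)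
     <= (p ^+ M)%:E)%E.
  rewrite mem_filter => /andP[MB _].
  have := indep (map (eshift (box_point N f)) B) (fun=> `]-oo, G]%classic).
  rewrite !big_map => -> //; last first.
    by rewrite map_inj_uniq ?fset_uniq //; exact: eshift_inj.
  under eq_bigr do rewrite law // muG.
  rewrite prodEFin big_const_seq count_predT iter_mulr_1 lee_fin.
  by case/andP: p01 => p0 p1; exact: ler_wiXn2l.
apply: (@le_trans _ _
  (\sum_(B <- big_subsets d b M) \sum_(f : {ffun 'I_d -> 'I_(2 * N).+1}) (p ^+ M)%:E)%E).
  apply: le_trans; first apply: le_measure_bigsetU_seq => B.
    by apply: bigsetU_measurable => f _; exact: bigsetI_measurable.
  rewrite big_seq [leRHS]big_seq; apply: lee_sum => B BF.
  apply: le_trans; first apply: le_measure_bigsetU_seq => f.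
    exact: bigsetI_measurable.
  by apply: lee_sum => f _; exact: translate_bound.
under eq_bigr do rewrite sumEFin.
rewrite sumEFin lee_fin sumr_const card_ffun !card_ord.
rewrite big_const_seq count_predT iter_addr_0.
by rewrite -mulrnA mulr_natl addn1 mulnC.
Qed.
End bad_event_probability.

Lemma box_size_dyadic_le k b d :
  ((2 * (2 ^ k.+1 + b) + 1) ^ d <= (5 + 2 * b) ^ d * (2 ^ k) ^ d)%N.
Proof.
rewrite -expnMn; case: d => [|d]; first by [].
rewrite leq_exp2r // expnS; have k0 : (0 < 2 ^ k)%N by rewrite expn_gt0.
have : (2 * b <= 2 * b * 2 ^ k)%N by rewrite leq_pmulr.
rewrite mulnDl; lia.
Qed.

Lemma powR_lt1 (R : realType) (a x : R) : 1 < a -> x < 0 -> a `^ x < 1.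
Proof.
move=> a1 x0; rewrite lt_neqAle powR_eq1 (gt_eqF a1) (lt_eqF x0) ltNge.
rewrite (le_trans ler01 (ltW a1)) /=.
by rewrite -[leRHS](powRr0 a) ler_powR // ltW.
Qed.

Lemma dyadic_exponent_lt0 (R : realFieldType) (d m kappa : nat) (eps : R) :
  (0 < d)%N -> (0 < m)%N -> eps < kappa%:R / (m + kappa)%:R ->
  d%:R * (1 - (1 - eps) * ((m + kappa)%:R / m%:R)) < 0.
Proof.
move=> d0 m0; rewrite ltr_pdivlMr ?ltr0n ?addn_gt0 ?m0 // => epsK.
rewrite pmulr_rlt0 ?ltr0n // subr_lt0 mulrA ltr_pdivlMr ?ltr0n // mul1r natrD.
lra.
Qed.

(* Raising the hypothesis to the power M/m trades powers of p for powers of U. *)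
Lemma rescale_growth_bound (R : realType) (d m M : nat) (theta C U p : R) :
  (0 < m)%N -> 0 < U -> 0 <= p ->
  (U `^ theta) ^+ d * p ^+ m <= C ->
  p ^+ M * U ^+ d <=
    C `^ (M%:R / m%:R) * U `^ (d%:R * (1 - theta * (M%:R / m%:R))).
Proof.
move=> m0 U0 p0 growth; set r := M%:R / m%:R.
have r0 : 0 <= r by rewrite divr_ge0.
have pM : p ^+ M = (p ^+ m) `^ r.
  by rewrite -!powR_mulrn // -powRrM /r mulrC divfK // pnatr_eq0 -lt0n.
have Ud : U ^+ d = U `^ (theta * (d%:R * r)) * U `^ (d%:R * (1 - theta * r)).
  rewrite -powRD; last by rewrite (gt_eqF U0) implybT.
  by rewrite -powR_mulrn ?ltW //; congr (_ `^ _); ring.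
have lhs0 : 0 <= (U `^ theta) ^+ d * p ^+ m by rewrite mulr_ge0 ?exprn_ge0 ?powR_ge0.
have : ((U `^ theta) ^+ d * p ^+ m) `^ r <= C `^ r.
  by apply: ge0_ler_powR; rewrite ?nnegrE //; exact: le_trans growth.
rewrite powRM ?exprn_ge0 ?powR_ge0 // -powR_mulrn ?powR_ge0 // -!powRrM -pM.
have -> : p ^+ M * U ^+ d =
    U `^ (theta * (d%:R * r)) * p ^+ M * U `^ (d%:R * (1 - theta * r)).
  by rewrite Ud; ring.
by move=> bound; apply: ler_wpM2r bound; exact: powR_ge0.
Qed.

Lemma eseries_geometric (R : realType) (c q : R) : `|q| < 1 ->
  (\sum_(k <oo) (c * q ^+ k)%:E = (c / (1 - q))%:E)%E.
Proof.
move=> q1; apply/cvg_lim => //; apply: cvg_EFin.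
  by apply: nearW => n; rewrite /= sumEFin.
rewrite [X in X @ _ --> _](_ : _ = series (geometric c q)).
  exact: cvg_geometric_series.
by apply/funext => n; rewrite /= sumEFin.
Qed.

Lemma liminf_set_measurable dm (T : measurableType dm) (E : (set T)^nat) :
  (forall n, measurable (E n)) -> measurable (liminf_set T E).
Proof.
move=> mE; have -> : liminf_set T E = \bigcup_N \bigcap_(n in [set n | (N <= n)%N]) E n.
  by apply/seteqP; split => t [N] => [|_] EN; exists N.
apply: bigcupT_measurable => N; apply: bigcap_measurable => [|n _]; last exact: mE.
by exists N => /=.
Qed.

Lemma setC_liminf_set_sub_dyadic T (E F : (set T)^nat) :
  (forall n, (0 < n)%N -> E n `<=` F (trunc_log 2 n)) ->
  ~` liminf_set T (fun n => ~` E n) `<=` lim_sup_set F.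
Proof.
move=> EF t nL K _.
have [n [Kn Ent]] : exists n, (2 ^ K <= n)%N /\ E n t.
  apply: contrapT => nE; apply: nL; exists (2 ^ K)%N => n Kn Ent.
  by apply: nE; exists n.
have n0 : (0 < n)%N by apply: leq_trans Kn; rewrite expn_gt0.
by exists (trunc_log 2 n); [exact: trunc_log_max | exact: EF n0 _ Ent].
Qed.

(* trunc_log 2 n is the index k of the dyadic block [2^k, 2^(k+1)) of n. *)
Lemma dyadic_borel_cantelli dm (T : measurableType dm) (R : realType)
    (P : probability T R) (E F : (set T)^nat) :
  (forall n, measurable (E n)) -> (forall k, measurable (F k)) ->
  (forall n, (0 < n)%N -> E n `<=` F (trunc_log 2 n)) ->
  (\sum_(k <oo) P (F k) < +oo)%E ->
  P (liminf_set T (fun n => ~` E n)) = 1%E.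
Proof.
move=> mE mF EF Foo.
have mL : measurable (liminf_set T (fun n => ~` E n)).
  by apply: liminf_set_measurable => n; exact: measurableC.
have mS : measurable (lim_sup_set F).
  by apply: bigcapT_measurable => k; apply: bigcup_measurable => j _.
have PnL : P (~` liminf_set T (fun n => ~` E n)) = 0%E.
  apply/eqP; rewrite eq_le measure_ge0 andbT -(@lim_sup_set_cvg0 _ _ _ P _ mF Foo).
  apply: le_measure; [exact/mem_set/measurableC | exact/mem_set |].
  exact: setC_liminf_set_sub_dyadic.
by rewrite -[liminf_set _ _]setCK probability_setC ?PnL ?sube0 //; exact: measurableC.
Qed.

Lemma growth_bound_exponent_gt0 {R : realType} {d m : nat} {C : R} (p : R -> R) :
  (0 < d)%N -> (forall u, 0 < u -> u ^+ d * p u ^+ m <= C) -> (0 < m)%N.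
Proof.
move=> d0 growth; rewrite lt0n; apply/eqP => m0.
have := growth (`|C| + 1) (ltr_wpDl (normr_ge0 _) ltr01); rewrite m0 expr0 mulr1.
have : `|C| + 1 <= (`|C| + 1) ^+ d by apply: ler_eXnr; rewrite // lerDr.
have := ler_norm C; lra.
Qed.

Lemma bad_event_dyadic_bound (R : realType) (d : nat) (dm : measure_display)
    (T : measurableType dm) (P : probability T R) (w : edge d -> T -> R)
    (mu : probability R R) (b m M k : nat) (theta C G : R) :
  iid_with_law R dm T P d w mu -> (0 < m)%N ->
  ((2 ^ k)%:R `^ theta) ^+ d * fine (mu `]-oo, G]%classic) ^+ m <= C ->
  (P (bad_event w b M (2 ^ k.+1 + b)%N G) <=
   ((size (big_subsets d b M) * (5 + 2 * b) ^ d)%N%:R * C `^ (M%:R / m%:R)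
     * (2 `^ (d%:R * (1 - theta * (M%:R / m%:R)))) ^+ k)%:E)%E.
Proof.
move=> iid m0 growth; apply: le_trans (bad_event_bound _ _ iid) _; rewrite lee_fin.
set U : R := (2 ^ k)%:R; set p := fine _.
have U0 : 0 < U by rewrite ltr0n expn_gt0.
have p0 : 0 <= p by rewrite fine_ge0 ?measure_ge0.
have box_size : ((size (big_subsets d b M) * (2 * (2 ^ k.+1 + b) + 1) ^ d)%N%:R : R)
    <= (size (big_subsets d b M) * (5 + 2 * b) ^ d)%N%:R * U ^+ d.
  by rewrite /U -natrX -natrM ler_nat -mulnA leq_mul2l box_size_dyadic_le orbT.
have Ua a : U `^ a = (2 `^ a) ^+ k.
  by rewrite /U natrX -powR_mulrn // -powRrM mulrC powRrM powR_mulrn.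
apply: le_trans (ler_wpM2r (exprn_ge0 _ p0) box_size) _.
rewrite -!mulrA -Ua; apply: ler_wpM2l => //; rewrite mulrC.
exact: rescale_growth_bound m0 U0 p0 growth.
Qed.

Theorem corollary2p3 (R : realType) (d : nat) (dm : measure_display)
  (T : measurableType dm) (P : probability T R)
  (w : edge d -> T -> R) (mu : probability R R) (g : R -> R)
  (b m kappa : nat) (eps : R) :
  (2 <= d)%N ->
  iid_with_law R dm T P d w mu ->
  (forall e t, 0 < w e t) ->
  (forall u, 0 < u -> 0 < g u) ->
  (forall u v, 0 < u -> u <= v -> g v <= g u) ->
  (g x @[x --> +oo%R] --> 0%R) ->
  (m < ecard d (edges_of d (box d b)))%N ->
  (exists C : R, forall u, 0 < u ->
     u ^+ d * (fine (mu `]-oo, g u]%classic)) ^+ m <= C) ->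
  0 <= eps -> eps < kappa%:R / (m + kappa)%:R ->
  P (liminf_set T (fun n : nat =>
       \bigcap_(A in [set A : set (edge d) |
                        A `<=` edges_of d (box d b) /\ (m + kappa <= ecard d A)%N])
         \bigcap_(z in box d (n + b))
           J_event R d T w (g (powR n%:R (1 - eps))) (etranslate d A z))) = 1%E.
Proof.
move=> d2 iid _ _ gmono _ _ [C growth] _ epsK.
have d0 : (0 < d)%N by apply: leq_trans d2.
have m0 : (0 < m)%N := growth_bound_exponent_gt0 _ d0 growth.
have eps1 : eps <= 1.
  apply/ltW/(lt_le_trans epsK).
  by rewrite ler_pdivrMr ?ltr0n ?addn_gt0 ?m0 // mul1r ler_nat leq_addl.
have [mw _ _] := iid.
under eq_fun do rewrite bigcap_J_eventE.
apply: (@dyadic_borel_cantelli _ _ _ _ _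
  (fun k => bad_event w b (m + kappa)%N (2 ^ k.+1 + b)%N (g ((2 ^ k)%:R `^ (1 - eps)))))
  => [n|k|n n0|].
- exact: bad_event_measurable.
- exact: bad_event_measurable.
- apply: bad_event_le; first by rewrite leq_add2r ltnW // trunc_log_ltn.
  apply: gmono; first by rewrite powR_gt0 // ltr0n expn_gt0.
  by apply: ge0_ler_powR; rewrite ?nnegrE ?subr_ge0 ?ler0n // ler_nat trunc_logP.
- apply: le_lt_trans (lee_nneseries _ _) _.
  + by move=> k _ _; exact: measure_ge0.
  + move=> k _; apply: bad_event_dyadic_bound iid m0 _.
    by apply: growth; rewrite powR_gt0 // ltr0n expn_gt0.
  rewrite eseries_geometric ?ltry // ger0_norm ?powR_ge0 //.
  by apply: powR_lt1; [rewrite ltr1n | exact: dyadic_exponent_lt0].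
Qed.
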